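(* Let $R$ be a unital ring, $E$ a directed graph, $X\subseteq\mathrm{Reg}(E)$, $S=M(\mathbb{Z},I)\cup\{0\}$, and $w$ a canonical weight mapping on $E$. Extend $w$ to the graph $E(X)$ by $w(v')=w(v)$ for $v\in Y$ and $w(\alpha')=w(\alpha)$ for edges $\alpha$ with $\mathrm{r}(\alpha)\in Y$. Then $C_R^X(E)$ (canonically $S$-graded via $w$) and $L_R(E(X))$ (canonically $S$-graded via the extended $w$) are graded isomorphic as $S$-graded rings, i.e. there is a ring isomorphism $\phi:C_R^X(E)\to L_R(E(X))$ with $\phi((C_R^X(E))_s)=(L_R(E(X)))_s$ for every $s\in S$.
   Context: Directed graph $E=(E^0,E^1,\mathrm{r},\mathrm{s})$; paths $E^*$ (vertices as length-$0$ paths); $\mathrm{Reg}(E)$ = vertices $v$ with $\mathrm{s}^{-1}(v)$ nonempty finite. For $X\subseteq\mathrm{Reg}(E)$, $C_R^X(E)$ is the $R$-algebra generated by $E^0$, $E^1$, $\{\alpha^*\}$ ($R$ commuting with generators) subject to $vv'=\delta_{v,v'}v$; $\mathrm{s}(\alpha)\alpha=\alpha\mathrm{r}(\alpha)=\alpha$, $\mathrm{r}(\alpha)\alpha^*=\alpha^*\mathrm{s}(\alpha)=\alpha^*$; $\alpha^*\alpha'=\delta_{\alpha,\alpha'}\mathrm{r}(\alpha)$; $\sum_{\mathrm{s}(\alpha)=v}\alpha\alpha^*=v$ for $v\in X$; $L_R(F)=C_R^{\mathrm{Reg}(F)}(F)$ for any graph $F$. The graph $E(X)$: let $Y=\mathrm{Reg}(E)\setminus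 X$ and $Y'=\{v':v\in Y\}$ a set of new vertices; $E(X)^0=E^0\sqcup Y'$, $E(X)^1=E^1\sqcup\{\alpha':\alpha\in E^1,\mathrm{r}(\alpha)\in Y\}$ where $\alpha'$ is a new edge with $\mathrm{s}(\alpha')=\mathrm{s}(\alpha)$, $\mathrm{r}(\alpha')=\mathrm{r}(\alpha)'$. $M(\mathbb{Z},I)=I\times\mathbb{Z}\times I$, $(i,a,j)(k,b,l)=(i,a+b,l)$ if $j=k$, else undefined; $S=M(\mathbb{Z},I)\cup\{0\}$, undefined products $0$, $0$ absorbing; $(i,a,j)^{-1}=(j,-a,i)$. Canonical weight mapping on a graph: vertices get weights $(i,0,i)$, edges $(i,1,j)$, $w(\alpha^* )=w(\alpha)^{-1}$, $w(\mathrm{s}(\alpha))w(\alpha)=w(\alpha)=w(\alpha)w(\mathrm{r}(\alpha))$; for each nonzero idempotent $f$, edges with source of weight $f$ share a weight and edges with range of weight $f$ share a weight; extended multiplicatively with $w(\mu\eta^* )=w(\mu)w(\eta)^{-1}$. Canonical grading: the $s$-component is the $R$-span of $\mu\eta^*$, $\mathrm{r}(\mu)=\mathrm{r}(\eta)$, $w(\mu\eta^* )=s$; the $0$-component is $0$. *)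

From HB Require Import structures.
From mathcomp Require Import all_boot all_order all_algebra.
From Stdlib Require List.
From Stdlib Require Import ClassicalEpsilon.
Set Implicit Arguments. Unset Strict Implicit. Unset Printing Implicit Defensive.
Import GRing.Theory.
Local Open Scope ring_scope.

Record graph := Graph { gV : Type; gE : Type; src : gE -> gV; rng : gE -> gV }.

Definition Reg (E : graph) (v : gV E) : Prop :=
  (exists e : gE E, src e = v) /\
  (exists l : seq (gE E), forall e, src e = v -> List.In e l).

Section EX.
Variables (E : graph) (X : gV E -> Prop).
Definition Yset (v : gV E) : Prop := @Reg E v /\ ~ X v.
Definition EX_V := (gV E + {v : gV E | Yset v})%type.
Definition EX_E := (gE E + {e : gE E | Yset (rng e)})%type.
Definition EX_src (e : EX_E) : EX_V :=
  match e with inl e => inl (src e) | inr e' => inl (src (proj1_sig e')) end.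
Definition EX_rng (e : EX_E) : EX_V :=
  match e with
  | inl e => inl (rng e)
  | inr e' => inr (exist _ (rng (proj1_sig e')) (proj2_sig e'))
  end.
Definition EXgraph : graph := Graph EX_src EX_rng.
End EX.

(* None is 0, Some (i,a,j) is (i,a,j). *)
Definition Ssg (I : Type) := option (I * int * I)%type.

Definition smul (I : Type) (x y : Ssg I) : Ssg I :=
  match x, y with
  | Some (i, a, j), Some (k, b, l) =>
      if excluded_middle_informative (j = k) then Some (i, a + b, l) else None
  | _, _ => None
  end.

Definition sinv (I : Type) (x : Ssg I) : Ssg I :=
  match x with Some (i, a, j) => Some (j, - a, i) | None => None end.

Record canonical_weight (E : graph) (I : Type)
    (wv : gV E -> Ssg I) (we : gE E -> Ssg I) : Prop := {
  cw_vert : forall v, exists i, wv v = Some (i, 0%R, i);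
  cw_edge : forall e, exists i j, we e = Some (i, 1%R, j);
  cw_src : forall e, smul (wv (src e)) (we e) = we e;
  cw_rng : forall e, smul (we e) (wv (rng e)) = we e;
  cw_share_src : forall f : Ssg I, f <> None -> smul f f = f ->
      forall e e', wv (src e) = f -> wv (src e') = f -> we e = we e';
  cw_share_rng : forall f : Ssg I, f <> None -> smul f f = f ->
      forall e e', wv (rng e) = f -> wv (rng e') = f -> we e = we e'
}.

Definition EX_wv (E : graph) (X : gV E -> Prop) (I : Type) (wv : gV E -> Ssg I)
  (v : gV (EXgraph X)) : Ssg I :=
  match v with inl v => wv v | inr v' => wv (proj1_sig v') end.
Definition EX_we (E : graph) (X : gV E -> Prop) (I : Type) (we : gE E -> Ssg I)
  (e : gE (EXgraph X)) : Ssg I :=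
  match e with inl e => we e | inr e' => we (proj1_sig e') end.

(* A path is a pair (v, l): v is the starting vertex, l the list of edges.
   Length-0 paths are vertices. *)
Fixpoint path_ok (E : graph) (v : gV E) (l : seq (gE E)) : Prop :=
  match l with
  | [::] => True
  | e :: l' => src e = v /\ path_ok (rng e) l'
  end.

Fixpoint path_end (E : graph) (v : gV E) (l : seq (gE E)) : gV E :=
  match l with
  | [::] => v
  | e :: l' => path_end (rng e) l'
  end.

Definition path_weight (E : graph) (I : Type) (wv : gV E -> Ssg I)
  (we : gE E -> Ssg I) (v : gV E) (l : seq (gE E)) : Ssg I :=
  match l with
  | [::] => wv v
  | e :: l' => foldl (fun acc e => smul acc (we e)) (we e) l'
  end.

Section Alg.
Variables (R : pzRingType) (E : graph) (A : pzRingType).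
Variables (iA : R -> A) (pv : gV E -> A) (pe ps : gE E -> A).

Definition path_elt (v : gV E) (l : seq (gE E)) : A :=
  if l is [::] then pv v else \prod_(e <- l) pe e.
Definition path_star (v : gV E) (l : seq (gE E)) : A :=
  if l is [::] then pv v else \prod_(e <- rev l) ps e.

Record Cohn_rels (X : gV E -> Prop) : Prop := {
  cr_R_v : forall a v, iA a * pv v = pv v * iA a;
  cr_R_e : forall a e, iA a * pe e = pe e * iA a;
  cr_R_s : forall a e, iA a * ps e = ps e * iA a;
  cr_vv : forall v, pv v * pv v = pv v;
  cr_vv' : forall v v', v <> v' -> pv v * pv v' = 0;
  cr_se : forall e, pv (src e) * pe e = pe e;
  cr_er : forall e, pe e * pv (rng e) = pe e;
  cr_rs : forall e, pv (rng e) * ps e = ps e;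
  cr_ss : forall e, ps e * pv (src e) = ps e;
  cr_ee : forall e, ps e * pe e = pv (rng e);
  cr_ee' : forall e e', e <> e' -> ps e * pe e' = 0;
  cr_CK : forall v, X v -> forall l : seq (gE E), List.NoDup l ->
      (forall e, List.In e l <-> src e = v) ->
      \sum_(e <- l) pe e * ps e = pv v
}.

(* canonical S-graded components: the s-component is the R-span of the
   mu eta^{*} with r(mu) = r(eta) and w(mu eta^{*}) = s; the 0-component is 0 *)
Definition component (I : Type) (wv : gV E -> Ssg I) (we : gE E -> Ssg I)
  (s : Ssg I) (x : A) : Prop :=
  match s with
  | None => x = 0
  | Some _ =>
    exists t : seq (R * (gV E * seq (gE E)) * (gV E * seq (gE E))),
      (forall k, List.In k t ->
         path_ok k.1.2.1 k.1.2.2 /\ path_ok k.2.1 k.2.2 /\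
         path_end k.1.2.1 k.1.2.2 = path_end k.2.1 k.2.2 /\
         smul (path_weight wv we k.1.2.1 k.1.2.2)
              (sinv (path_weight wv we k.2.1 k.2.2)) = s) /\
      x = \sum_(k <- t) iA k.1.1 * (path_elt k.1.2.1 k.1.2.2 * path_star k.2.1 k.2.2)
  end.
End Alg.

(* (A, iA, pv, pe, ps) is (a presentation of) C_R^X(E): the generators satisfy
   the relations, and A is universal among rings receiving R with R commuting
   with the images of generators satisfying the relations. *)
Definition is_Cohn_algebra (R : pzRingType) (E : graph) (X : gV E -> Prop)
  (A : pzRingType) (iA : {rmorphism R -> A}) (pv : gV E -> A) (pe ps : gE E -> A)
  : Prop :=
  Cohn_rels iA pv pe ps X /\
  (forall (B : pzRingType) (iB : {rmorphism R -> B})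
          (qv : gV E -> B) (qe qs : gE E -> B),
     Cohn_rels iB qv qe qs X ->
     exists phi : {rmorphism A -> B},
       (forall a, phi (iA a) = iB a) /\ (forall v, phi (pv v) = qv v) /\
       (forall e, phi (pe e) = qe e) /\ (forall e, phi (ps e) = qs e)) /\
  (forall (B : pzRingType) (phi psi : {rmorphism A -> B}),
     (forall a, phi (iA a) = psi (iA a)) -> (forall v, phi (pv v) = psi (pv v)) ->
     (forall e, phi (pe e) = psi (pe e)) -> (forall e, phi (ps e) = psi (ps e)) ->
     phi =1 psi).

Definition is_Leavitt_algebra (R : pzRingType) (F : graph)
  (A : pzRingType) (iA : {rmorphism R -> A}) (pv : gV F -> A) (pe ps : gE F -> A)
  : Prop := is_Cohn_algebra (@Reg F) iA pv pe ps.

From HB Require Import structures.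
From mathcomp Require Import all_boot all_order all_algebra.
From mathcomp Require Import zify.
From Stdlib Require Import ClassicalEpsilon ProofIrrelevance.
From Stdlib Require List Permutation.
Set Implicit Arguments. Unset Strict Implicit. Unset Printing Implicit Defensive.
Import GRing.Theory.
Local Open Scope ring_scope.

(* In C_R^X(E) the Cuntz-Krieger relation v = sum_{s(a)=v} a a^* is missing
   exactly at the vertices v of Y = Reg(E) \ X, and E(X) records the defect
   v - sum a a^* as a new sink v'.  Accordingly phi : C_R^X(E) -> L_R(E(X))
   sends v to v + v' and a to a + a' (the primed terms only when they exist),
   while psi sends v to q_v, v' to v - q_v, a to a q_{r(a)} and a' to
   a (r(a) - q_{r(a)}), where q_v = sum_{s(a)=v} a a^* for v in Y and q_v = v
   otherwise.  Both maps come from the universal properties, and they are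
   mutually inverse because they are so on generators.  A canonical weight is
   (i_{s(a)}, 1, i_{r(a)}) on every edge, so mu eta^* has weight
   (i_{s(mu)}, |mu| - |eta|, i_{s(eta)}); phi and psi send such a monomial to a
   sum of monomials with the same sources and the same length difference (psi
   inserts a a^* at the common range), hence they preserve the grading. *)

Lemma rcons_path_ok (F : graph) (v : gV F) l b :
  path_ok v (rcons l b) <-> path_ok v l /\ src b = path_end v l.
Proof.
elim: l v => [|a l IH] v /=; first by split=> [[]|[_ ->]].
by have := IH (rng a); tauto.
Qed.

Lemma path_end_rcons (F : graph) (v : gV F) l b : path_end v (rcons l b) = rng b.
Proof. by elim: l v => [|a l IH] v /=. Qed.

Section PathMonomials.
Variables (F : graph) (A : pzRingType) (pv : gV F -> A) (pe ps : gE F -> A).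
Hypothesis pv_idem : forall v, pv v * pv v = pv v.
Hypothesis pv_pe : forall e, pv (src e) * pe e = pe e.
Hypothesis pe_pv : forall e, pe e * pv (rng e) = pe e.
Hypothesis pv_ps : forall e, pv (rng e) * ps e = ps e.
Hypothesis ps_pv : forall e, ps e * pv (src e) = ps e.

Definition ppath (l : seq (gE F)) := \prod_(e <- l) pe e.
Definition pghost (l : seq (gE F)) := \prod_(e <- rev l) ps e.

Lemma ppath_cons e l : ppath (e :: l) = pe e * ppath l.
Proof. by rewrite /ppath big_cons. Qed.

Lemma pghost_cons e l : pghost (e :: l) = pghost l * ps e.
Proof. by rewrite /pghost rev_cons -cats1 big_cat big_seq1. Qed.

Lemma ppath_rcons e l : ppath (rcons l e) = ppath l * pe e.
Proof. by rewrite /ppath -cats1 big_cat big_seq1. Qed.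

Lemma pghost_rcons e l : pghost (rcons l e) = ps e * pghost l.
Proof. by rewrite /pghost rev_rcons big_cons. Qed.

Lemma ppath_end v l :
  path_ok v l -> ppath l * pv (path_end v l) = path_elt pv pe v l.
Proof.
elim: l v => [|e l IH] v /=; first by rewrite /ppath big_nil mul1r.
move=> [_ Hl]; rewrite ppath_cons -mulrA IH //.
by case: l Hl {IH} => [|f l] _ /=; rewrite ?pe_pv /ppath ?big_seq1 ?big_cons.
Qed.

Lemma pghost_end v l :
  path_ok v l -> pv (path_end v l) * pghost l = path_star pv ps v l.
Proof.
elim: l v => [|e l IH] v /=; first by rewrite /pghost big_nil mulr1.
move=> [_ Hl]; rewrite pghost_cons mulrA IH //.
case: l Hl {IH} => [|f l] _ /=; first by rewrite pv_ps /pghost big_seq1.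
by rewrite [rev (e :: _)]rev_cons -cats1 big_cat big_seq1.
Qed.

Lemma pv_ppath v l : path_ok v l ->
  pv v * (ppath l * pv (path_end v l)) = ppath l * pv (path_end v l).
Proof.
case: l => [|e l] /=; first by rewrite /ppath big_nil !mul1r pv_idem.
by move=> [<- _]; rewrite ppath_cons !mulrA pv_pe.
Qed.

Lemma pghost_pv v l : path_ok v l ->
  pv (path_end v l) * pghost l * pv v = pv (path_end v l) * pghost l.
Proof.
case: l => [|e l] /=; first by rewrite /pghost big_nil !mulr1 pv_idem.
by move=> [<- _]; rewrite pghost_cons -!mulrA ps_pv.
Qed.

Lemma path_monomialE v1 l1 v2 l2 :
  path_ok v1 l1 -> path_ok v2 l2 -> path_end v1 l1 = path_end v2 l2 ->
  path_elt pv pe v1 l1 * path_star pv ps v2 l2 =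
  ppath l1 * pv (path_end v1 l1) * pghost l2.
Proof.
move=> H1 H2 He; rewrite -ppath_end // -pghost_end // -He.
by rewrite -!mulrA (mulrA (pv _)) pv_idem.
Qed.

End PathMonomials.

Lemma mulr_idem_split (A : pzRingType) (x p y : A) :
  p * p = p -> x * p * y = x * p * (p * y).
Proof. by move=> pp; rewrite mulrA -[x * p * p]mulrA pp. Qed.

Lemma rmorph_ppath (F : graph) (A B : pzRingType) (f : {rmorphism A -> B})
    (pe : gE F -> A) (qe : gE F -> B) l :
  (forall e, f (pe e) = qe e) -> f (ppath pe l) = ppath qe l.
Proof. by move=> fe; rewrite rmorph_prod; apply: eq_bigr. Qed.

Lemma rmorph_pghost (F : graph) (A B : pzRingType) (f : {rmorphism A -> B})
    (ps : gE F -> A) (qs : gE F -> B) l :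
  (forall e, f (ps e) = qs e) -> f (pghost ps l) = pghost qs l.
Proof. by move=> fs; rewrite rmorph_prod; apply: eq_bigr. Qed.

Lemma smul_some (I : Type) (i j k : I) (a b : int) :
  smul (Some (i, a, j)) (Some (j, b, k)) = Some (i, a + b, k).
Proof. by rewrite /smul; case: excluded_middle_informative. Qed.

Lemma canonical_weight_index (E : graph) (I : Type)
    (wv : gV E -> Ssg I) (we : gE E -> Ssg I) :
  canonical_weight wv we ->
  exists idx : gV E -> I,
    (forall v, wv v = Some (idx v, 0, idx v)) /\
    (forall e, we e = Some (idx (src e), 1, idx (rng e))).
Proof.
move=> Hw; have /choice [idx hwv] := cw_vert Hw.
exists idx; split=> // e; have [i [j Hij]] := cw_edge Hw e.
have := cw_src Hw e; have := cw_rng Hw e; rewrite Hij !hwv /smul.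
case: excluded_middle_informative => // Ej _.
by case: excluded_middle_informative => // Ei _; rewrite Ei Ej.
Qed.

Section PathWeights.
Variables (F : graph) (I : Type) (wv : gV F -> Ssg I) (we : gE F -> Ssg I).
Variable idx : gV F -> I.
Hypothesis wv_idx : forall v, wv v = Some (idx v, 0, idx v).
Hypothesis we_idx : forall e, we e = Some (idx (src e), 1, idx (rng e)).

Lemma foldl_weight i (n : int) v l : path_ok v l ->
  foldl (fun acc e => smul acc (we e)) (Some (i, n, idx v)) l =
  Some (i, n + (size l)%:Z, idx (path_end v l)).
Proof.
elim: l n v => [|e l IH] n v /=; first by rewrite addr0.
move=> [<- Hl]; rewrite we_idx /=; case: excluded_middle_informative => // ?.
by rewrite IH //; congr (Some (_, _, _)); lia.
Qed.

Lemma path_weight_index v l : path_ok v l ->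
  path_weight wv we v l = Some (idx v, (size l)%:Z, idx (path_end v l)).
Proof.
case: l => [|e l] /=; first by rewrite wv_idx.
by move=> [<- Hl]; rewrite we_idx foldl_weight //; congr (Some (_, _, _)); lia.
Qed.

Lemma monomial_weight v1 l1 v2 l2 :
  path_ok v1 l1 -> path_ok v2 l2 -> path_end v1 l1 = path_end v2 l2 ->
  smul (path_weight wv we v1 l1) (sinv (path_weight wv we v2 l2)) =
  Some (idx v1, (size l1)%:Z - (size l2)%:Z, idx v2).
Proof. by move=> H1 H2 He; rewrite !path_weight_index // He [sinv _]/= smul_some. Qed.

End PathWeights.

Lemma In_pmap (T U : Type) (f : T -> option U) (y : U) (s : seq T) :
  List.In y (pmap f s) <-> exists x, f x = Some y /\ List.In x s.
Proof.
elim: s => [|x s IH] /=; first by split=> // -[? []].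
case Efx: (f x) => [z|] /=; rewrite IH; split.
- by case=> [<-|[w [? ?]]]; [exists x | exists w]; auto.
- by case=> w [Hw [Ew|?]]; [left; move: Hw; rewrite -Ew Efx => -[] | right; exists w].
- by case=> w [? ?]; exists w; auto.
- by case=> w [Hw [Ew|?]]; [move: Hw; rewrite -Ew Efx | exists w].
Qed.

Lemma NoDup_pmap (T U : Type) (f : T -> option U) (s : seq T) :
  (forall x y z, f x = Some z -> f y = Some z -> x = y) ->
  List.NoDup s -> List.NoDup (pmap f s).
Proof.
move=> f_inj; elim=> [|x l Hx _ IH] /=; first by constructor.
case Efx: (f x) => [z|] //=; constructor=> //.
by move/In_pmap=> [y [Ey Hy]]; rewrite (f_inj _ _ _ Efx Ey) in Hx.
Qed.

Section SeqSums.
Variable A : pzRingType.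

Lemma eq_big_In (T : Type) (s : seq T) (f g : T -> A) :
  (forall x, List.In x s -> f x = g x) -> \sum_(x <- s) f x = \sum_(x <- s) g x.
Proof.
elim: s => [|x s IH] fg; first by rewrite !big_nil.
by rewrite !big_cons fg /=; [rewrite IH // => y Hy; apply: fg; right | left].
Qed.

Lemma big_Permutation (T : Type) (s1 s2 : seq T) (f : T -> A) :
  Permutation.Permutation s1 s2 -> \sum_(x <- s1) f x = \sum_(x <- s2) f x.
Proof.
elim=> [|x ? ? _ IH|x y l|? ? ? _ IH1 _ IH2]; rewrite ?big_cons ?IH ?IH1 //.
exact: addrCA.
Qed.

Lemma big_NoDup_eq (T : Type) (s1 s2 : seq T) (f : T -> A) :
  List.NoDup s1 -> List.NoDup s2 -> (forall x, List.In x s1 <-> List.In x s2) ->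
  \sum_(x <- s1) f x = \sum_(x <- s2) f x.
Proof. by move=> *; apply/big_Permutation/Permutation.NoDup_Permutation. Qed.

Lemma big_NoDup_pick (T : Type) (s : seq T) (f : T -> A) (x : T) :
  List.NoDup s -> List.In x s -> (forall y, List.In y s -> y <> x -> f y = 0) ->
  \sum_(y <- s) f y = f x.
Proof.
elim: s => [|y s IH] //= /List.NoDup_cons_iff [Hy Hs] Hx f0.
have f0s z : List.In z s -> z <> x -> f z = 0 by move=> *; apply: f0; auto.
rewrite big_cons; case: Hx => [Eyx|Hx].
  rewrite -Eyx (eq_big_In (g := fun=> 0)) ?big1 ?addr0 // => z Hz.
  by apply: f0s; rewrite // -Eyx => Ezy; rewrite Ezy in Hz.
by rewrite f0 ?add0r ?IH //; [left | move=> Eyx; rewrite Eyx in Hy].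
Qed.

End SeqSums.

Lemma Reg_out_edges (E : graph) (v : gV E) : Reg v ->
  exists l : seq (gE E), List.NoDup l /\ forall e, List.In e l <-> src e = v.
Proof.
move=> [_ [l Hl]].
pose inv e := if excluded_middle_informative (src e = v) then true else false.
exists (List.nodup (fun e e' => excluded_middle_informative (e = e'))
          (List.filter inv l)).
split=> [|e]; first exact: List.NoDup_nodup.
rewrite List.nodup_In List.filter_In /inv.
case: excluded_middle_informative => Hv; last by split=> // -[].
by split=> [[]|] // /Hl.
Qed.

Definition out_edges (E : graph) (v : gV E) : seq (gE E) :=
  epsilon (inhabits [::])
    (fun l => List.NoDup l /\ forall e, List.In e l <-> src e = v).

Lemma out_edgesP (E : graph) (v : gV E) : Reg v ->
  List.NoDup (out_edges v) /\ forall e, List.In e (out_edges v) <-> src e = v.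
Proof. by move/Reg_out_edges; apply: epsilon_spec. Qed.

Section Components.
Variables (R : pzRingType) (F : graph) (A : pzRingType) (iA : {rmorphism R -> A}).
Variables (pv : gV F -> A) (pe ps : gE F -> A).
Variables (I : Type) (wv : gV F -> Ssg I) (we : gE F -> Ssg I).
Local Notation comp := (component iA pv pe ps wv we).

Lemma component0 s : comp s 0.
Proof. by case: s => [s|] //=; exists [::]; rewrite big_nil. Qed.

Lemma componentD s x y : comp s x -> comp s y -> comp s (x + y).
Proof.
case: s => [s|] /=; last by move=> -> ->; rewrite addr0.
move=> [t1 [H1 ->]] [t2 [H2 ->]]; exists (t1 ++ t2); rewrite big_cat.
by split=> // k /List.in_app_iff [] ?; [apply: H1 | apply: H2].
Qed.

Lemma componentZ s a x : comp s x -> comp s (iA a * x).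
Proof.
case: s => [s|] /=; last by move=> ->; rewrite mulr0.
move=> [t [H ->]]; exists (map (fun k => ((a * k.1.1, k.1.2), k.2)) t); split.
  by move=> k /List.in_map_iff [k' [<- ?]] /=; apply: H.
by rewrite big_map mulr_sumr; apply: eq_bigr => k _; rewrite rmorphM mulrA.
Qed.

Lemma componentN s x : comp s x -> comp s (- x).
Proof. by rewrite -mulN1r -(rmorphN1 iA); apply: componentZ. Qed.

Lemma component_sum s (T : Type) (r : seq T) (f : T -> A) :
  (forall k, List.In k r -> comp s (f k)) -> comp s (\sum_(k <- r) f k).
Proof.
elim: r => [|k r IH] H; first by rewrite big_nil; apply: component0.
by rewrite big_cons; apply: componentD; [apply: H; left | apply: IH => *; apply: H; right].
Qed.

End Components.

Section MonomialComponents.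
Variables (R : pzRingType) (F : graph) (A : pzRingType) (iA : {rmorphism R -> A}).
Variables (pv : gV F -> A) (pe ps : gE F -> A).
Hypothesis pv_idem : forall v, pv v * pv v = pv v.
Hypothesis pe_pv : forall e, pe e * pv (rng e) = pe e.
Hypothesis pv_ps : forall e, pv (rng e) * ps e = ps e.
Variables (I : Type) (wv : gV F -> Ssg I) (we : gE F -> Ssg I) (idx : gV F -> I).
Hypothesis wv_idx : forall v, wv v = Some (idx v, 0, idx v).
Hypothesis we_idx : forall e, we e = Some (idx (src e), 1, idx (rng e)).

Lemma component_path_monomial v1 l1 v2 l2 s :
  path_ok v1 l1 -> path_ok v2 l2 -> path_end v1 l1 = path_end v2 l2 ->
  s = Some (idx v1, (size l1)%:Z - (size l2)%:Z, idx v2) ->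
  component iA pv pe ps wv we s (ppath pe l1 * pv (path_end v1 l1) * pghost ps l2).
Proof.
move=> H1 H2 He ->; exists [:: ((1, (v1, l1)), (v2, l2))]; split.
  by move=> k [<-|[]]; rewrite ?(monomial_weight wv_idx we_idx).
by rewrite big_seq1 rmorph1 mul1r (path_monomialE pv_idem pe_pv pv_ps).
Qed.

End MonomialComponents.

Section EXCombinatorics.
Variables (E : graph) (X : gV E -> Prop).
Local Notation EXG := (EXgraph X).
Local Notation emi := excluded_middle_informative.

Definition base_vertex (w : gV EXG) : gV E :=
  match w with inl v => v | inr v' => proj1_sig v' end.
Definition base_edge (e : gE EXG) : gE E :=
  match e with inl a => a | inr a' => proj1_sig a' end.

Lemma src_EX (e : gE EXG) : src e = inl (src (base_edge e)).
Proof. by case: e. Qed.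

Lemma rng_EX (e : gE EXG) : base_vertex (rng e) = rng (base_edge e).
Proof. by case: e. Qed.

Definition primed_edge (a : gE E) : option (gE EXG) :=
  match emi (Yset X (rng a)) with
  | left h => Some (inr (exist _ a h))
  | right _ => None
  end.

Definition EX_edges (l : seq (gE E)) : seq (gE EXG) :=
  map inl l ++ pmap primed_edge l.

Lemma EX_edgesP v l : List.NoDup l -> (forall e, List.In e l <-> src e = v) ->
  List.NoDup (EX_edges l) /\
  forall e : gE EXG, List.In e (EX_edges l) <-> src e = inl v.
Proof.
move=> Hn Hl; split.
  apply: List.NoDup_app.
  - by apply: FinFun.Injective_map_NoDup => // x y [].
  - apply: NoDup_pmap => // x y z; rewrite /primed_edge.
    by case: emi => // ? [<-]; case: emi => // ? [].
  - move=> x /List.in_map_iff [a [<- _]] /In_pmap [b []].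
    by rewrite /primed_edge; case: emi.
move=> e; rewrite List.in_app_iff List.in_map_iff In_pmap; split.
  case=> [[a [<- /Hl <-]] //|[a []]].
  by rewrite /primed_edge; case: emi => // h [<-] /Hl /= ->.
case: e => [a|[a h]] /= [Hs]; first by left; exists a; rewrite Hl.
right; exists a; rewrite Hl /primed_edge; split=> //.
by case: emi => // h'; rewrite (proof_irrelevance _ h h').
Qed.

Lemma big_EX_edges (A : pzRingType) (f : gE EXG -> A) l :
  \sum_(e <- EX_edges l) f e =
  \sum_(a <- l) (f (inl a) +
     match emi (Yset X (rng a)) with
     | left h => f (inr (exist _ a h))
     | right _ => 0
     end).
Proof.
rewrite big_cat big_map big_pmap big_split /=; congr (_ + _).
by apply: eq_bigr => a _; rewrite /primed_edge; case: emi.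
Qed.

Lemma Reg_EX_inl v : Reg v -> @Reg EXG (inl v).
Proof.
move=> Hv; have [[e He] _] := Hv; have [l [Hn Hl]] := Reg_out_edges Hv.
have [_ Hl'] := EX_edgesP Hn Hl.
by split; [exists (inl e); rewrite /= He | exists (EX_edges l) => e' /Hl'].
Qed.

Lemma Reg_EX w : @Reg EXG w -> exists2 v, w = inl v & Reg v.
Proof.
move=> [[e He] [l Hl]]; move: He Hl; rewrite src_EX => <- Hl.
exists (src (base_edge e)) => //; split; first by exists (base_edge e).
exists (map base_edge l) => a Ha; apply/List.in_map_iff; exists (inl a); split=> //.
by apply: Hl; rewrite /= Ha.
Qed.

Lemma path_inl v l : path_ok v l ->
  @path_ok EXG (inl v) (map inl l) /\
  @path_end EXG (inl v) (map inl l) = inl (path_end v l).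
Proof. by elim: l v => [|a l IH] v //= [-> /IH [? ->]]. Qed.

Lemma path_base (w : gV EXG) (k : seq (gE EXG)) : path_ok w k ->
  path_ok (base_vertex w) (map base_edge k) /\
  path_end (base_vertex w) (map base_edge k) = base_vertex (path_end w k).
Proof.
by elim: k w => [|e k IH] w //= [<- /IH []]; case: e => [a|[a h]] /= Hk ->.
Qed.

(* In phi (mu v eta^* ) with v in Y, the summand mu v' eta^* is the monomial
   of the lifts of mu and eta, whose last edges are primed. *)
Definition lift_vertex (v : gV E) : gV EXG :=
  match emi (Yset X v) with left h => inr (exist _ v h) | right _ => inl v end.

Definition lift_start (v : gV E) (l : seq (gE E)) : gV EXG :=
  if l is [::] then lift_vertex v else inl v.

Fixpoint lift_path (l : seq (gE E)) : seq (gE EXG) :=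
  match l with
  | [::] => [::]
  | [:: a] => match emi (Yset X (rng a)) with
              | left h => [:: inr (exist _ a h)]
              | right _ => [:: inl a]
              end
  | a :: l' => inl a :: lift_path l'
  end.

Lemma base_lift_vertex v : base_vertex (lift_vertex v) = v.
Proof. by rewrite /lift_vertex; case: emi. Qed.

Lemma base_lift_start v l : base_vertex (lift_start v l) = v.
Proof. by case: l => [|? ?] //=; rewrite base_lift_vertex. Qed.

Lemma size_lift_path l : size (lift_path l) = size l.
Proof.
by elim: l => [|a [|b l] IH] //=; [case: emi | rewrite IH].
Qed.

Lemma lift_pathP v l : path_ok v l -> Yset X (path_end v l) ->
  @path_ok EXG (lift_start v l) (lift_path l) /\
  @path_end EXG (lift_start v l) (lift_path l) = lift_vertex (path_end v l).
Proof.
elim: l v => [|a [|b l] IH] v //= [<- Hl] HY; last by case: (IH _ Hl HY).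
by rewrite /lift_vertex; case: emi.
Qed.

End EXCombinatorics.

Arguments base_vertex {E X}.
Arguments base_edge {E X}.

Section Isomorphism.
Variables (R : pzRingType) (E : graph) (X : gV E -> Prop).
Local Notation EXG := (EXgraph X).
Local Notation emi := excluded_middle_informative.
Variables (I : Type) (wv : gV E -> Ssg I) (we : gE E -> Ssg I) (idx : gV E -> I).
Hypothesis wv_idx : forall v, wv v = Some (idx v, 0, idx v).
Hypothesis we_idx : forall e, we e = Some (idx (src e), 1, idx (rng e)).

Lemma EX_wv_idx (w : gV EXG) :
  EX_wv wv w = Some (idx (base_vertex w), 0, idx (base_vertex w)).
Proof. by case: w => [v|[v h]] /=; rewrite wv_idx. Qed.

Lemma EX_we_idx (e : gE EXG) :
  EX_we we e = Some (idx (base_vertex (src e)), 1, idx (base_vertex (rng e))).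
Proof. by case: e => [a|[a h]] /=; rewrite we_idx. Qed.

Section LeavittSide.
Variables (L : pzRingType) (iL : {rmorphism R -> L}).
Variables (lv : gV EXG -> L) (le ls : gE EXG -> L).
Hypothesis HL : Cohn_rels iL lv le ls (@Reg EXG).
Let lv_idem := cr_vv HL.
Let lv_orth := cr_vv' HL.
Let lv_le := cr_se HL.
Let le_lv := cr_er HL.
Let lv_ls := cr_rs HL.
Let ls_lv := cr_ss HL.
Let ls_le := cr_ee HL.
Let ls_le_neq := cr_ee' HL.

Definition lvY (v : gV E) : L :=
  match emi (Yset X v) with left h => lv (inr (exist _ v h)) | right _ => 0 end.
Definition leY (a : gE E) : L :=
  match emi (Yset X (rng a)) with left h => le (inr (exist _ a h)) | right _ => 0 end.
Definition lsY (a : gE E) : L :=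
  match emi (Yset X (rng a)) with left h => ls (inr (exist _ a h)) | right _ => 0 end.

Definition phiv v := lv (inl v) + lvY v.
Definition phie a := le (inl a) + leY a.
Definition phis a := ls (inl a) + lsY a.

Lemma lvY_Y v (h : Yset X v) : lvY v = lv (inr (exist _ v h)).
Proof. by rewrite /lvY; case: emi => // h'; rewrite (proof_irrelevance _ h h'). Qed.
Lemma lvY_nY v : ~ Yset X v -> lvY v = 0.
Proof. by rewrite /lvY; case: emi. Qed.
Lemma leY_Y a (h : Yset X (rng a)) : leY a = le (inr (exist _ a h)).
Proof. by rewrite /leY; case: emi => // h'; rewrite (proof_irrelevance _ h h'). Qed.
Lemma leY_nY a : ~ Yset X (rng a) -> leY a = 0.
Proof. by rewrite /leY; case: emi. Qed.
Lemma lsY_Y a (h : Yset X (rng a)) : lsY a = ls (inr (exist _ a h)).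
Proof. by rewrite /lsY; case: emi => // h'; rewrite (proof_irrelevance _ h h'). Qed.
Lemma lsY_nY a : ~ Yset X (rng a) -> lsY a = 0.
Proof. by rewrite /lsY; case: emi. Qed.

Lemma lv_lvY w v : lv (inl w) * lvY v = 0.
Proof. by rewrite /lvY; case: emi => h; rewrite ?mulr0 // lv_orth. Qed.
Lemma lvY_lv w v : lvY v * lv (inl w) = 0.
Proof. by rewrite /lvY; case: emi => h; rewrite ?mul0r // lv_orth. Qed.
Lemma lvY_idem v : lvY v * lvY v = lvY v.
Proof. by rewrite /lvY; case: emi => h; rewrite ?mul0r // lv_idem. Qed.
Lemma lvY_orth v w : v <> w -> lvY v * lvY w = 0.
Proof.
move=> Hvw; rewrite /lvY; case: emi => h; rewrite ?mul0r //.
by case: emi => h'; rewrite ?mulr0 // lv_orth // => -[].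
Qed.

Lemma lv_leY a : lv (inl (src a)) * leY a = leY a.
Proof. by rewrite /leY; case: emi => h; [exact: (lv_le (inr (exist _ a h))) | rewrite mulr0]. Qed.
Lemma leY_lvY a : leY a * lvY (rng a) = leY a.
Proof.
by rewrite /leY /lvY; case: emi => h; [exact: (le_lv (inr (exist _ a h))) | rewrite mulr0].
Qed.
Lemma lvY_lsY a : lvY (rng a) * lsY a = lsY a.
Proof.
by rewrite /lsY /lvY; case: emi => h; [exact: (lv_ls (inr (exist _ a h))) | rewrite mulr0].
Qed.
Lemma lsY_lv a : lsY a * lv (inl (src a)) = lsY a.
Proof. by rewrite /lsY; case: emi => h; [exact: (ls_lv (inr (exist _ a h))) | rewrite mul0r]. Qed.
Lemma lsY_leY a : lsY a * leY a = lvY (rng a).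
Proof.
by rewrite /lsY /leY /lvY; case: emi => h; [exact: (ls_le (inr (exist _ a h))) | rewrite mulr0].
Qed.
Lemma lsY_leY_neq a b : a <> b -> lsY a * leY b = 0.
Proof.
move=> Hab; rewrite /lsY /leY; case: emi => h; rewrite ?mul0r //.
by case: emi => h'; rewrite ?mulr0 // ls_le_neq // => -[].
Qed.
Lemma ls_leY a b : ls (inl a) * leY b = 0.
Proof. by rewrite /leY; case: emi => h; rewrite ?mulr0 // ls_le_neq. Qed.
Lemma lsY_le a b : lsY a * le (inl b) = 0.
Proof. by rewrite /lsY; case: emi => h; rewrite ?mul0r // ls_le_neq. Qed.

Lemma leY_lv a w : leY a * lv (inl w) = 0.
Proof. by rewrite -leY_lvY -mulrA lvY_lv mulr0. Qed.
Lemma lv_lsY a w : lv (inl w) * lsY a = 0.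
Proof. by rewrite -lvY_lsY mulrA lv_lvY mul0r. Qed.
Lemma le_lvY a w : le (inl a) * lvY w = 0.
Proof. by rewrite -(le_lv (inl a)) -mulrA lv_lvY mulr0. Qed.
Lemma lvY_ls a w : lvY w * ls (inl a) = 0.
Proof. by rewrite -(lv_ls (inl a)) mulrA lvY_lv mul0r. Qed.
Lemma lvY_le a w : lvY w * le (inl a) = 0.
Proof. by rewrite -(lv_le (inl a)) mulrA lvY_lv mul0r. Qed.
Lemma lvY_leY a w : lvY w * leY a = 0.
Proof. by rewrite -lv_leY mulrA lvY_lv mul0r. Qed.
Lemma ls_lvY a w : ls (inl a) * lvY w = 0.
Proof. by rewrite -(ls_lv (inl a)) -mulrA lv_lvY mulr0. Qed.
Lemma lsY_lvY a w : lsY a * lvY w = 0.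
Proof. by rewrite -lsY_lv -mulrA lv_lvY mulr0. Qed.
Lemma le_lsY a b : le (inl a) * lsY b = 0.
Proof. by rewrite -(le_lv (inl a)) -mulrA lv_lsY mulr0. Qed.
Lemma leY_ls a b : leY a * ls (inl b) = 0.
Proof. by rewrite -leY_lvY -mulrA lvY_ls mulr0. Qed.

Lemma phiv_idem v : phiv v * phiv v = phiv v.
Proof. by rewrite /phiv mulrDl !mulrDr lv_idem lv_lvY lvY_lv lvY_idem add0r addr0. Qed.
Lemma phiv_orth v w : v <> w -> phiv v * phiv w = 0.
Proof.
move=> H; rewrite /phiv mulrDl !mulrDr lv_lvY lvY_lv lvY_orth // lv_orth => [|[]//].
by rewrite !addr0.
Qed.
Lemma phiv_phie a : phiv (src a) * phie a = phie a.
Proof. by rewrite /phiv /phie mulrDl !mulrDr (lv_le (inl a)) lv_leY lvY_le lvY_leY !addr0. Qed.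
Lemma phie_phiv a : phie a * phiv (rng a) = phie a.
Proof. by rewrite /phiv /phie mulrDl !mulrDr (le_lv (inl a)) le_lvY leY_lv leY_lvY addr0 add0r. Qed.
Lemma phiv_phis a : phiv (rng a) * phis a = phis a.
Proof. by rewrite /phiv /phis mulrDl !mulrDr (lv_ls (inl a)) lv_lsY lvY_ls lvY_lsY addr0 add0r. Qed.
Lemma phis_phiv a : phis a * phiv (src a) = phis a.
Proof. by rewrite /phiv /phis mulrDl !mulrDr (ls_lv (inl a)) ls_lvY lsY_lv lsY_lvY !addr0. Qed.
Lemma phis_phie a : phis a * phie a = phiv (rng a).
Proof.
by rewrite /phiv /phis /phie mulrDl !mulrDr (ls_le (inl a)) ls_leY lsY_le lsY_leY addr0 add0r.
Qed.
Lemma phis_phie_neq a b : a <> b -> phis a * phie b = 0.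
Proof.
move=> H; rewrite /phis /phie mulrDl !mulrDr ls_leY lsY_le lsY_leY_neq // ls_le_neq => [|[]//].
by rewrite !addr0.
Qed.

Lemma phi_out_edges v l : Reg v -> List.NoDup l -> (forall e, List.In e l <-> src e = v) ->
  \sum_(a <- l) phie a * phis a = lv (inl v).
Proof.
move=> Hv Hn Hl; have [Hn' Hl'] := EX_edgesP X Hn Hl.
rewrite -(cr_CK HL (Reg_EX_inl X Hv) Hn' Hl') big_EX_edges; apply: eq_bigr => a _.
rewrite /phie /phis mulrDl !mulrDr le_lsY leY_ls addr0 add0r; congr (_ + _).
by rewrite /leY /lsY; case: emi => h; rewrite ?mulr0.
Qed.

Lemma phi_rels : (forall v, X v -> Reg v) -> Cohn_rels iL phiv phie phis X.
Proof.
move=> HX; constructor.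
- move=> a v; apply: commrD; first exact: (cr_R_v HL).
  by rewrite /lvY; case: emi => h; [exact: (cr_R_v HL) | exact: commr0].
- move=> a e; apply: commrD; first exact: (cr_R_e HL).
  by rewrite /leY; case: emi => h; [exact: (cr_R_e HL) | exact: commr0].
- move=> a e; apply: commrD; first exact: (cr_R_s HL).
  by rewrite /lsY; case: emi => h; [exact: (cr_R_s HL) | exact: commr0].
- exact: phiv_idem.
- exact: phiv_orth.
- exact: phiv_phie.
- exact: phie_phiv.
- exact: phiv_phis.
- exact: phis_phiv.
- exact: phis_phie.
- exact: phis_phie_neq.
- move=> v Xv l Hn Hl; rewrite /phiv lvY_nY ?addr0; last by case=> _ [].
  exact: phi_out_edges (HX _ Xv) Hn Hl.
Qed.

Lemma lv_ppath_lift b l :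
  lv (inl (src b)) * ppath le (lift_path X (b :: l)) = ppath le (lift_path X (b :: l)).
Proof.
case: l => [|c l] /=; last by rewrite ppath_cons mulrA (lv_le (inl b)).
by case: emi => h; rewrite /ppath big_seq1;
  [exact: (lv_le (inr (exist _ b h))) | exact: (lv_le (inl b))].
Qed.

Lemma pghost_lift_lv b l :
  pghost ls (lift_path X (b :: l)) * lv (inl (src b)) = pghost ls (lift_path X (b :: l)).
Proof.
case: l => [|c l] /=; last by rewrite pghost_cons -mulrA (ls_lv (inl b)).
by case: emi => h; rewrite /pghost /= big_seq1;
  [exact: (ls_lv (inr (exist _ b h))) | exact: (ls_lv (inl b))].
Qed.

Lemma ppath_phie_lv v l : path_ok v l ->
  ppath phie l * lv (inl (path_end v l)) = ppath le (map inl l) * lv (inl (path_end v l)).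
Proof.
elim: l v => [|a l IH] v /=; first by rewrite /ppath !big_nil.
move=> [_ Hl]; have [Hok Hend] := path_inl X Hl.
rewrite !ppath_cons -!mulrA IH // /phie mulrDl -[in T in _ + T]Hend.
by rewrite -(pv_ppath lv_idem lv_le Hok) [T in _ + T]mulrA leY_lv mul0r addr0.
Qed.

Lemma lv_pghost_phis v l : path_ok v l ->
  lv (inl (path_end v l)) * pghost phis l = lv (inl (path_end v l)) * pghost ls (map inl l).
Proof.
elim: l v => [|a l IH] v /=; first by rewrite /pghost !big_nil.
move=> [_ Hl]; have [Hok Hend] := path_inl X Hl.
rewrite !pghost_cons !mulrA IH // /phis mulrDr -[in T in _ + T]Hend.
by rewrite -(pghost_pv lv_idem ls_lv Hok) -[T in _ + T]mulrA lv_lsY mulr0 addr0.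
Qed.

Lemma ppath_phie_lvY v l : path_ok v l ->
  ppath phie l * lvY (path_end v l) = ppath le (lift_path X l) * lvY (path_end v l).
Proof.
elim: l v => [|a [|b l] IH] v; first by rewrite /ppath !big_nil.
  move=> _ /=; rewrite ppath_cons /ppath big_nil mulr1 /phie mulrDl le_lvY add0r leY_lvY.
  by rewrite /leY /lvY; case: emi => h; rewrite ?mulr0 // big_seq1 (le_lv (inr (exist _ a h))).
move=> [_ Hl]; have Hb : src b = rng a by case: Hl.
change (path_end v [:: a, b & l]) with (path_end (rng a) (b :: l)).
change (lift_path X [:: a, b & l]) with (inl a :: lift_path X (b :: l)).
rewrite [ppath phie _]ppath_cons [ppath le _]ppath_cons -!mulrA IH // /phie mulrDl.
by rewrite -lv_ppath_lift Hb !mulrA leY_lv !mul0r addr0.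
Qed.

Lemma lvY_pghost_phis v l : path_ok v l ->
  lvY (path_end v l) * pghost phis l = lvY (path_end v l) * pghost ls (lift_path X l).
Proof.
elim: l v => [|a [|b l] IH] v; first by rewrite /pghost !big_nil.
  move=> _ /=; rewrite pghost_cons /pghost big_nil mul1r /phis mulrDr lvY_ls add0r lvY_lsY.
  by rewrite /lsY /lvY; case: emi => h; rewrite ?mul0r //= big_seq1 (lv_ls (inr (exist _ a h))).
move=> [_ Hl]; have Hb : src b = rng a by case: Hl.
change (path_end v [:: a, b & l]) with (path_end (rng a) (b :: l)).
change (lift_path X [:: a, b & l]) with (inl a :: lift_path X (b :: l)).
rewrite [pghost phis _]pghost_cons [pghost ls _]pghost_cons !mulrA IH // /phis mulrDr.
by rewrite -pghost_lift_lv Hb -!mulrA lv_lsY !mulr0 addr0.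
Qed.

Lemma lvY_lift_vertex v : Yset X v -> lvY v = lv (lift_vertex X v).
Proof. by rewrite /lvY /lift_vertex; case: emi. Qed.

Lemma phi_monomial_component v1 l1 v2 l2 s :
  path_ok v1 l1 -> path_ok v2 l2 -> path_end v1 l1 = path_end v2 l2 ->
  s = Some (idx v1, (size l1)%:Z - (size l2)%:Z, idx v2) ->
  component iL lv le ls (EX_wv wv) (EX_we we) s
    (ppath phie l1 * phiv (path_end v1 l1) * pghost phis l2).
Proof.
have EX_comp := component_path_monomial iL lv_idem le_lv lv_ls EX_wv_idx EX_we_idx.
move=> H1 H2 He Hs; rewrite /phiv mulrDr mulrDl; apply: componentD.
  rewrite (mulr_idem_split _ _ (lv_idem _)) ppath_phie_lv // {2}He lv_pghost_phis //.
  rewrite -He -(mulr_idem_split _ _ (lv_idem _)).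
  have [ok1 E1] := path_inl X H1; have [ok2 E2] := path_inl X H2.
  by rewrite -E1; apply: (EX_comp _ _ (inl v2)); rewrite ?E1 ?E2 ?He ?size_map.
case: (emi (Yset X (path_end v1 l1))) => Y1; last first.
  by rewrite lvY_nY // mulr0 mul0r; apply: component0.
rewrite (mulr_idem_split _ _ (lvY_idem _)) ppath_phie_lvY // {2}He lvY_pghost_phis //.
rewrite -He -(mulr_idem_split _ _ (lvY_idem _)) lvY_lift_vertex //.
have Y2 : Yset X (path_end v2 l2) by rewrite -He.
have [ok1 E1] := lift_pathP H1 Y1; have [ok2 E2] := lift_pathP H2 Y2.
rewrite -E1; apply: (EX_comp _ _ (lift_start X v2 l2));
  by rewrite ?E1 ?E2 ?He ?size_lift_path ?base_lift_start.
Qed.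

End LeavittSide.

Section CohnSide.
Variables (C : pzRingType) (iC : {rmorphism R -> C}).
Variables (cv : gV E -> C) (ce cs : gE E -> C).
Hypothesis HC : Cohn_rels iC cv ce cs X.
Let cv_idem := cr_vv HC.
Let cv_orth := cr_vv' HC.
Let cv_ce := cr_se HC.
Let ce_cv := cr_er HC.
Let cv_cs := cr_rs HC.
Let cs_cv := cr_ss HC.
Let cs_ce := cr_ee HC.
Let cs_ce_neq := cr_ee' HC.

Definition ck_sum v := \sum_(b <- out_edges v) ce b * cs b.

Definition qv v := if emi (Yset X v) then ck_sum v else cv v.

Definition psiv (w : gV EXG) : C :=
  match w with
  | inl v => qv v
  | inr v' => cv (proj1_sig v') - qv (proj1_sig v')
  end.
Definition psie (e : gE EXG) := ce (base_edge e) * psiv (rng e).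
Definition psis (e : gE EXG) := psiv (rng e) * cs (base_edge e).

Section RegularVertex.
Variable v : gV E.
Hypothesis Hv : Reg v.

Lemma cv_ck_sum : cv v * ck_sum v = ck_sum v.
Proof.
rewrite /ck_sum mulr_sumr; apply: eq_big_In => b Hb.
by have [_ /(_ b) [Hs _]] := out_edgesP Hv; rewrite mulrA -(Hs Hb) cv_ce.
Qed.

Lemma ck_sum_cv : ck_sum v * cv v = ck_sum v.
Proof.
rewrite /ck_sum mulr_suml; apply: eq_big_In => b Hb.
by have [_ /(_ b) [Hs _]] := out_edgesP Hv; rewrite -mulrA -(Hs Hb) cs_cv.
Qed.

Lemma ck_sum_ce a : src a = v -> ck_sum v * ce a = ce a.
Proof.
move=> Ha; have [Hn Hl] := out_edgesP Hv.
rewrite /ck_sum mulr_suml (big_NoDup_pick (x := a) Hn); last 2 first.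
- by apply/Hl.
- by move=> b _ Hb; rewrite -mulrA cs_ce_neq // mulr0.
by rewrite -mulrA cs_ce ce_cv.
Qed.

Lemma cs_ck_sum a : src a = v -> cs a * ck_sum v = cs a.
Proof.
move=> Ha; have [Hn Hl] := out_edgesP Hv.
rewrite /ck_sum mulr_sumr (big_NoDup_pick (x := a) Hn); last 2 first.
- by apply/Hl.
- by move=> b _ Hb; rewrite mulrA cs_ce_neq ?mul0r // => Eab; apply: Hb.
by rewrite mulrA cs_ce cv_cs.
Qed.

Lemma ck_sum_idem : ck_sum v * ck_sum v = ck_sum v.
Proof.
rewrite {2}/ck_sum mulr_sumr /ck_sum; apply: eq_big_In => b Hb.
by have [_ /(_ b) [Hs _]] := out_edgesP Hv; rewrite mulrA ck_sum_ce // Hs.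
Qed.

End RegularVertex.

Lemma qv_Y v : Yset X v -> qv v = ck_sum v.
Proof. by rewrite /qv; case: emi. Qed.
Lemma qv_nY v : ~ Yset X v -> qv v = cv v.
Proof. by rewrite /qv; case: emi. Qed.

Lemma cv_qv v : cv v * qv v = qv v.
Proof. by rewrite /qv; case: emi => h; [have [Hv _] := h; exact: cv_ck_sum | exact: cv_idem]. Qed.
Lemma qv_cv v : qv v * cv v = qv v.
Proof. by rewrite /qv; case: emi => h; [have [Hv _] := h; exact: ck_sum_cv | exact: cv_idem]. Qed.
Lemma qv_idem v : qv v * qv v = qv v.
Proof. by rewrite /qv; case: emi => h; [have [Hv _] := h; exact: ck_sum_idem | exact: cv_idem]. Qed.
Lemma qv_ce a : qv (src a) * ce a = ce a.
Proof. by rewrite /qv; case: emi => h; [have [Hv _] := h; exact: ck_sum_ce | exact: cv_ce]. Qed.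
Lemma cs_qv a : cs a * qv (src a) = cs a.
Proof. by rewrite /qv; case: emi => h; [have [Hv _] := h; exact: cs_ck_sum | exact: cs_cv]. Qed.

Lemma cv_psiv w : cv (base_vertex w) * psiv w = psiv w.
Proof. by case: w => [v|[v _]] /=; rewrite ?mulrBr ?cv_idem cv_qv. Qed.
Lemma psiv_cv w : psiv w * cv (base_vertex w) = psiv w.
Proof. by case: w => [v|[v _]] /=; rewrite ?mulrBl ?cv_idem qv_cv. Qed.
Lemma psiv_idem w : psiv w * psiv w = psiv w.
Proof.
case: w => [v|[v _]] /=; first exact: qv_idem.
by rewrite mulrBl !mulrBr cv_idem cv_qv qv_cv qv_idem subrr subr0.
Qed.

Lemma psiv_orth w w' : w <> w' -> psiv w * psiv w' = 0.
Proof.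
move=> Hww'; case: (emi (base_vertex w = base_vertex w')) => Hb; last first.
  by rewrite -(psiv_cv w) -(cv_psiv w') -mulrA (mulrA (cv _)) cv_orth // mul0r mulr0.
case: w w' Hww' Hb => [v|[v hv]] [v'|[v' hv']] /= Hww' Hb; subst.
- by case: Hww'.
- by rewrite mulrBr qv_cv qv_idem subrr.
- by rewrite mulrBl cv_qv qv_idem subrr.
- by case: Hww'; rewrite (proof_irrelevance _ hv hv').
Qed.

Lemma psiv_psie e : psiv (src e) * psie e = psie e.
Proof. by rewrite src_EX /psie mulrA qv_ce. Qed.
Lemma psie_psiv e : psie e * psiv (rng e) = psie e.
Proof. by rewrite /psie -mulrA psiv_idem. Qed.
Lemma psiv_psis e : psiv (rng e) * psis e = psis e.
Proof. by rewrite /psis mulrA psiv_idem. Qed.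
Lemma psis_psiv e : psis e * psiv (src e) = psis e.
Proof. by rewrite src_EX /psis -mulrA cs_qv. Qed.
Lemma psis_psie e : psis e * psie e = psiv (rng e).
Proof. by rewrite /psis /psie mulrA -(mulrA _ (cs _)) cs_ce -rng_EX psiv_cv psiv_idem. Qed.

Lemma psis_psie_neq e e' : e <> e' -> psis e * psie e' = 0.
Proof.
move=> Hee'; rewrite /psis /psie mulrA -(mulrA _ (cs _)).
case: (emi (base_edge e = base_edge e')) => Hb; last by rewrite cs_ce_neq // mulr0 mul0r.
rewrite Hb cs_ce -rng_EX -mulrA cv_psiv psiv_orth //.
by case: e e' Hee' Hb => [a|[a h]] [a'|[a' h']] //= Hee' Ha; subst;
  [case: Hee' | case: Hee'; rewrite (proof_irrelevance _ h h')].
Qed.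

Lemma psi_out_edges w : @Reg EXG w -> forall l : seq (gE EXG), List.NoDup l ->
  (forall e, List.In e l <-> src e = w) -> \sum_(e <- l) psie e * psis e = psiv w.
Proof.
move=> /Reg_EX [v -> Hv] l Hn Hl; have [Hn0 Hl0] := out_edgesP Hv.
have [Hn1 Hl1] := EX_edgesP X Hn0 Hl0.
rewrite (big_NoDup_eq _ Hn Hn1) => [|e]; last by rewrite Hl Hl1.
rewrite big_EX_edges (eq_bigr (fun b => ce b * cs b)) => [|a _].
  rewrite /= /qv; case: emi => // nY.
  have Xv : X v by case: (classic (X v)) => // nX; case: nY.
  exact: (cr_CK HC Xv Hn0 Hl0).
rewrite /psie /psis; case: emi => h; first last.
  by rewrite addr0 /= qv_nY // ce_cv cv_cs.
rewrite !mulrA -!(mulrA (ce _)) !psiv_idem /= -mulrDr -mulrDl.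
by rewrite addrC subrK cv_cs.
Qed.

Lemma psi_rels : Cohn_rels iC psiv psie psis (@Reg EXG).
Proof.
have comm_qv a v : GRing.comm (iC a) (qv v).
  rewrite /qv; case: emi => h; last exact: (cr_R_v HC).
  by apply: commr_sum => b _; apply: commrM; [exact: (cr_R_e HC) | exact: (cr_R_s HC)].
have comm_psiv a w : GRing.comm (iC a) (psiv w).
  case: w => [v|[v _]] /=; first exact: comm_qv.
  by apply: commrB; [exact: (cr_R_v HC) | exact: comm_qv].
constructor.
- exact: comm_psiv.
- by move=> a e; apply: commrM; [exact: (cr_R_e HC) | exact: comm_psiv].
- by move=> a e; apply: commrM; [exact: comm_psiv | exact: (cr_R_s HC)].
- exact: psiv_idem.
- exact: psiv_orth.
- exact: psiv_psie.
- exact: psie_psiv.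
- exact: psiv_psis.
- exact: psis_psiv.
- exact: psis_psie.
- exact: psis_psie_neq.
- exact: psi_out_edges.
Qed.

Lemma psiv_ppath (w : gV EXG) k : path_ok w k ->
  psiv w * (ppath ce (map base_edge k) * psiv (path_end w k)) =
  ppath ce (map base_edge k) * psiv (path_end w k).
Proof.
case: k => [|f k]; first by rewrite /ppath big_nil !mul1r psiv_idem.
by move=> [<- _]; rewrite src_EX [map _ _]/= ppath_cons !mulrA qv_ce.
Qed.

Lemma pghost_psiv (w : gV EXG) k : path_ok w k ->
  psiv (path_end w k) * pghost cs (map base_edge k) * psiv w =
  psiv (path_end w k) * pghost cs (map base_edge k).
Proof.
case: k => [|f k]; first by rewrite /pghost big_nil !mulr1 psiv_idem.
by move=> [<- _]; rewrite src_EX [map _ _]/= pghost_cons -!mulrA cs_qv.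
Qed.

Lemma ppath_psie (w : gV EXG) k : path_ok w k ->
  ppath psie k * psiv (path_end w k) = ppath ce (map base_edge k) * psiv (path_end w k).
Proof.
elim: k w => [|e k IH] w /=; first by rewrite /ppath !big_nil.
by move=> [_ Hk]; rewrite !ppath_cons -!mulrA IH // psiv_ppath.
Qed.

Lemma psiv_pghost (w : gV EXG) k : path_ok w k ->
  psiv (path_end w k) * pghost psis k = psiv (path_end w k) * pghost cs (map base_edge k).
Proof.
elim: k w => [|e k IH] w /=; first by rewrite /pghost !big_nil.
by move=> [_ Hk]; rewrite !pghost_cons !mulrA IH // pghost_psiv.
Qed.

Lemma ck_sum_monomial_component v1 l1 v2 l2 s :
  path_ok v1 l1 -> path_ok v2 l2 -> path_end v1 l1 = path_end v2 l2 ->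
  Reg (path_end v1 l1) ->
  s = Some (idx v1, (size l1)%:Z - (size l2)%:Z, idx v2) ->
  component iC cv ce cs wv we s (ppath ce l1 * ck_sum (path_end v1 l1) * pghost cs l2).
Proof.
move=> H1 H2 He Hr Hs; have [_ Hl] := out_edgesP Hr.
rewrite /ck_sum mulr_sumr mulr_suml; apply: component_sum => b /Hl Hb.
have -> : ppath ce l1 * (ce b * cs b) * pghost cs l2 =
    ppath ce (rcons l1 b) * cv (path_end v1 (rcons l1 b)) * pghost cs (rcons l2 b).
  by rewrite path_end_rcons ppath_rcons pghost_rcons -[in RHS](mulrA (ppath ce l1)) ce_cv !mulrA.
apply: (component_path_monomial _ cv_idem ce_cv cv_cs wv_idx we_idx _ (v2 := v2)).
- by rewrite rcons_path_ok.
- by rewrite rcons_path_ok -He.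
- by rewrite !path_end_rcons.
- by rewrite Hs !size_rcons; congr (Some (_, _, _)); lia.
Qed.

Lemma psi_monomial_component (w1 : gV EXG) k1 w2 k2 s :
  path_ok w1 k1 -> path_ok w2 k2 -> path_end w1 k1 = path_end w2 k2 ->
  s = Some (idx (base_vertex w1), (size k1)%:Z - (size k2)%:Z, idx (base_vertex w2)) ->
  component iC cv ce cs wv we s (ppath psie k1 * psiv (path_end w1 k1) * pghost psis k2).
Proof.
move=> H1 H2 He Hs.
rewrite (mulr_idem_split _ _ (psiv_idem _)) ppath_psie // {2}He psiv_pghost //.
rewrite -He -(mulr_idem_split _ _ (psiv_idem _)).
have [ok1 E1] := path_base H1; have [ok2 E2] := path_base H2.
have Ee : path_end (base_vertex w1) (map base_edge k1) =
          path_end (base_vertex w2) (map base_edge k2) by rewrite E1 E2 He.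
rewrite -(size_map base_edge k1) -(size_map base_edge k2) in Hs.
have cv_comp := component_path_monomial iC cv_idem ce_cv cv_cs wv_idx we_idx ok1 ok2 Ee Hs.
have ck_comp := ck_sum_monomial_component ok1 ok2 Ee.
case: (path_end w1 k1) E1 => [x|[x hx]] /= E1; rewrite E1 in cv_comp ck_comp.
  rewrite /qv; case: emi => h; last exact: cv_comp.
  by apply: ck_comp => //; case: h.
rewrite qv_Y // mulrBr mulrBl; apply: componentD; first exact: cv_comp.
by apply/componentN/ck_comp => //; case: hx.
Qed.

End CohnSide.

Section GradedInverse.
Variables (C : pzRingType) (iC : {rmorphism R -> C}).
Variables (cv : gV E -> C) (ce cs : gE E -> C).
Hypothesis HC : Cohn_rels iC cv ce cs X.
Variables (L : pzRingType) (iL : {rmorphism R -> L}).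
Variables (lv : gV EXG -> L) (le ls : gE EXG -> L).
Hypothesis HL : Cohn_rels iL lv le ls (@Reg EXG).
Variables (phi : {rmorphism C -> L}) (psi : {rmorphism L -> C}).
Hypothesis phi_gens :
  (forall a, phi (iC a) = iL a) /\ (forall v, phi (cv v) = phiv lv v) /\
  (forall a, phi (ce a) = phie le a) /\ (forall a, phi (cs a) = phis ls a).
Hypothesis psi_gens :
  (forall a, psi (iL a) = iC a) /\ (forall w, psi (lv w) = psiv cv ce cs w) /\
  (forall e, psi (le e) = psie cv ce cs e) /\ (forall e, psi (ls e) = psis cv ce cs e).
Let phi_iC := phi_gens.1.
Let phi_cv := phi_gens.2.1.
Let phi_ce := phi_gens.2.2.1.
Let phi_cs := phi_gens.2.2.2.
Let psi_iL := psi_gens.1.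
Let psi_lv := psi_gens.2.1.
Let psi_le := psi_gens.2.2.1.
Let psi_ls := psi_gens.2.2.2.

Lemma phi_qv v : phi (qv cv ce cs v) = lv (inl v).
Proof.
rewrite /qv; case: emi => h; last by rewrite phi_cv /phiv lvY_nY ?addr0.
have [Hv _] := h; have [Hn Hl] := out_edgesP Hv.
rewrite /ck_sum rmorph_sum -(phi_out_edges HL Hv Hn Hl).
by apply: eq_bigr => b _; rewrite rmorphM phi_ce phi_cs.
Qed.

Lemma phi_qvC v (h : Yset X v) : phi (cv v - qv cv ce cs v) = lv (inr (exist _ v h)).
Proof. by rewrite rmorphB phi_qv phi_cv /phiv (lvY_Y lv h) addrAC subrr add0r. Qed.

Lemma psi_phi_cv v : psi (phi (cv v)) = cv v.
Proof.
rewrite phi_cv /phiv rmorphD psi_lv /=.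
case: (emi (Yset X v)) => h; last by rewrite lvY_nY // rmorph0 addr0 qv_nY.
by rewrite (lvY_Y lv h) psi_lv /= addrC subrK.
Qed.

Lemma psi_phi_ce a : psi (phi (ce a)) = ce a.
Proof.
rewrite phi_ce /phie rmorphD psi_le /psie /=.
case: (emi (Yset X (rng a))) => h; last by rewrite leY_nY // rmorph0 addr0 qv_nY // (cr_er HC).
by rewrite (leY_Y le h) psi_le /psie /= -mulrDr addrC subrK (cr_er HC).
Qed.

Lemma psi_phi_cs a : psi (phi (cs a)) = cs a.
Proof.
rewrite phi_cs /phis rmorphD psi_ls /psis /=.
case: (emi (Yset X (rng a))) => h; last by rewrite lsY_nY // rmorph0 addr0 qv_nY // (cr_rs HC).
by rewrite (lsY_Y ls h) psi_ls /psis /= -mulrDl addrC subrK (cr_rs HC).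
Qed.

Lemma phi_psi_lv w : phi (psi (lv w)) = lv w.
Proof. by case: w => [v|[v h]]; rewrite psi_lv /= ?phi_qv ?phi_qvC. Qed.

Lemma phi_psi_le e : phi (psi (le e)) = le e.
Proof.
case: e => [a|[a h]]; rewrite psi_le /psie /= rmorphM phi_ce.
  by rewrite phi_qv /phie mulrDl (cr_er HL (inl a)) (leY_lv HL) addr0.
by rewrite phi_qvC -(lvY_Y lv h) /phie mulrDl (le_lvY HL) add0r (leY_lvY HL) (leY_Y le h).
Qed.

Lemma phi_psi_ls e : phi (psi (ls e)) = ls e.
Proof.
case: e => [a|[a h]]; rewrite psi_ls /psis /= rmorphM phi_cs.
  by rewrite phi_qv /phis mulrDr (cr_rs HL (inl a)) (lv_lsY HL) addr0.
by rewrite phi_qvC -(lvY_Y lv h) /phis mulrDr (lvY_ls HL) add0r (lvY_lsY HL) (lsY_Y ls h).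
Qed.

Lemma component_phi s x :
  component iC cv ce cs wv we s x ->
  component iL lv le ls (EX_wv wv) (EX_we we) s (phi x).
Proof.
case: s => [s|]; last by move=> /= ->; rewrite rmorph0.
move=> [t [Ht ->]]; rewrite rmorph_sum; apply: component_sum => k /Ht [ok1 [ok2 [He Hw]]].
rewrite rmorphM phi_iC; apply: componentZ.
rewrite (path_monomialE (cr_vv HC) (cr_er HC) (cr_rs HC) ok1 ok2 He) !rmorphM.
rewrite (rmorph_ppath _ phi_ce) (rmorph_pghost _ phi_cs) phi_cv.
apply: (phi_monomial_component HL _ _ (v2 := k.2.1)) => //.
by rewrite -Hw (monomial_weight wv_idx we_idx).
Qed.

Lemma component_psi s y :
  component iL lv le ls (EX_wv wv) (EX_we we) s y ->
  component iC cv ce cs wv we s (psi y).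
Proof.
case: s => [s|]; last by move=> /= ->; rewrite rmorph0.
move=> [t [Ht ->]]; rewrite rmorph_sum; apply: component_sum => k /Ht [ok1 [ok2 [He Hw]]].
rewrite rmorphM psi_iL; apply: componentZ.
rewrite (path_monomialE (cr_vv HL) (cr_er HL) (cr_rs HL) ok1 ok2 He) !rmorphM.
rewrite (rmorph_ppath _ psi_le) (rmorph_pghost _ psi_ls) psi_lv.
apply: (psi_monomial_component HC _ _ (w2 := k.2.1)) => //.
by rewrite -Hw (monomial_weight EX_wv_idx EX_we_idx).
Qed.

End GradedInverse.

End Isomorphism.

Unset Implicit Arguments.

Theorem proposition5p13
  (R : pzRingType) (E : graph) (X : gV E -> Prop)
  (HX : forall v, X v -> @Reg E v)
  (I : Type) (wv : gV E -> Ssg I) (we : gE E -> Ssg I)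
  (Hw : canonical_weight wv we)
  (C : pzRingType) (iC : {rmorphism R -> C})
  (cv : gV E -> C) (ce cs : gE E -> C)
  (HC : is_Cohn_algebra X iC cv ce cs)
  (L : pzRingType) (iL : {rmorphism R -> L})
  (lv : gV (EXgraph X) -> L) (le ls : gE (EXgraph X) -> L)
  (HL : is_Leavitt_algebra iL lv le ls) :
  exists phi : {rmorphism C -> L},
    bijective phi /\
    forall (s : Ssg I) (y : L),
      component iL lv le ls (@EX_wv E X I wv) (@EX_we E X I we) s y <->
      exists x : C, component iC cv ce cs wv we s x /\ phi x = y.
Proof.
have [idx [wv_idx we_idx]] := canonical_weight_index Hw.
case: HC => Crels [Cuniv Cuniq]; case: HL => Lrels [Luniv Luniq].
have [phi phi_gens] := Cuniv _ _ _ _ _ (phi_rels Lrels HX).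
have [psi psi_gens] := Luniv _ _ _ _ _ (psi_rels Crels).
have phiK : cancel phi psi.
  apply: (Cuniq _ (psi \o phi : {rmorphism C -> C}) idfun) => /= [a|v|a|a].
  - by rewrite phi_gens.1 psi_gens.1.
  - exact: (psi_phi_cv phi_gens psi_gens v).
  - exact: (psi_phi_ce Crels phi_gens psi_gens a).
  - exact: (psi_phi_cs Crels phi_gens psi_gens a).
have psiK : cancel psi phi.
  apply: (Luniq _ (phi \o psi : {rmorphism L -> L}) idfun) => /= [a|w|e|e].
  - by rewrite psi_gens.1 phi_gens.1.
  - exact: (phi_psi_lv Lrels phi_gens psi_gens w).
  - exact: (phi_psi_le Lrels phi_gens psi_gens e).
  - exact: (phi_psi_ls Lrels phi_gens psi_gens e).
exists phi; split=> [|s y]; first by exists psi.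
split=> [Hy|[x [Hx <-]]]; last exact: (component_phi wv_idx we_idx Crels Lrels phi_gens Hx).
exists (psi y); split; last exact: psiK.
exact: (component_psi wv_idx we_idx Crels Lrels psi_gens Hy).
Qed.
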